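(* Let $P=\{\mathbf{x}^{(\mathrm{p})}_i\}_{i=1}^{n_{\mathrm p}}$ and $U=\{\mathbf{x}^{(\mathrm{u})}_i\}_{i=1}^{n_{\mathrm u}}$ be finite sets of points in $\mathbb{R}^d$ (positive and unlabeled examples), let $\pi\in(0,1)$, $w_{\mathrm p}=\pi/n_{\mathrm p}$ and $w_{\mathrm u}=1/n_{\mathrm u}$. Let $P'\subseteq P$ and $U'\subseteq U$, not both empty. For a loss $\ell:\mathbb{R}\times\{-1,+1\}\to\mathbb{R}$ define $$\hat R_{\mathrm{uPU}}(v;P',U')=\sum_{\mathbf{x}\in P'}w_{\mathrm p}\,\ell(v,+1)-\sum_{\mathbf{x}\in P'}w_{\mathrm p}\,\ell(v,-1)+\sum_{\mathbf{x}\in U'}w_{\mathrm u}\,\ell(v,-1),$$ and $\hat R^*_{\mathrm{uPU}}(P',U')=\inf_{v\in\mathbb{R}}\hat R_{\mathrm{uPU}}(v;P',U')\in[-\infty,\infty)$. Let $W_{\mathrm p}=|P'|w_{\mathrm p}$, $W_{\mathrm n}=|U'|w_{\mathrm u}-|P'|w_{\mathrm p}$, and $v^*=\frac{W_{\mathrm p}}{W_{\mathrm p}+W_{\mathrm n}}$, where $v^*=+\infty$ if $W_{\mathrm p}+W_{\mathrm n}=0$. (a) For the quadratic loss $\ell(v,y)=(1-vy)^2$: $$\hat R^*_{\mathrm{uPU}}(P',U')=\begin{cases}-\infty,& v^*=+\infty,\\ 4(W_{\mathrm p}+W_{\mathrm n})\,v^*(1-v^* ),&\text{otherwise.}\end{cases}$$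 (b) For the logistic loss $\ell(v,y)=\ln(1+\exp(-vy))$: $$\hat R^*_{\mathrm{uPU}}(P',U')=\begin{cases}(W_{\mathrm p}+W_{\mathrm n})\bigl(-v^*\ln v^*-(1-v^* )\ln(1-v^* )\bigr),& 0<v^*<1,\\ 0,& v^*\in\{0,1\},\\ -\infty,& v^*>1.\end{cases}$$
   Context: This is the unbiased PU (uPU) risk estimate restricted to a node of a decision tree containing positive examples $P'$ and unlabeled examples $U'$, when a constant score $v$ is predicted at that node. *)

From HB Require Import structures.
From mathcomp Require Import all_boot all_order all_algebra.
From mathcomp Require Import all_classical all_reals all_analysis.
Set Implicit Arguments. Unset Strict Implicit. Unset Printing Implicit Defensive.
Import Order.TTheory GRing.Theory Num.Theory.
Local Open Scope ring_scope.

(* uPU risk at a node with positives P' (indices into P) and unlabeled U'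
   (indices into U), constant score v, loss ell : R -> R -> R (label +1/-1 as reals). *)
Definition uPU_risk (R : realType) (np nu : nat) (pi : R)
  (ell : R -> R -> R) (P' : {set 'I_np}) (U' : {set 'I_nu}) (v : R) : R :=
  let wp := pi / np%:R in let wu := 1 / nu%:R in
  \sum_(i in P') wp * ell v 1 - \sum_(i in P') wp * ell v (-1)
  + \sum_(j in U') wu * ell v (-1).

Definition uPU_inf (R : realType) (np nu : nat) (pi : R)
  (ell : R -> R -> R) (P' : {set 'I_np}) (U' : {set 'I_nu}) : \bar R :=
  ereal_inf [set (uPU_risk pi ell P' U' v)%:E | v in [set: R]].

Definition Wp (R : realType) (np nu : nat) (pi : R)
  (P' : {set 'I_np}) (U' : {set 'I_nu}) : R := #|P'|%:R * (pi / np%:R).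
Definition Wn (R : realType) (np nu : nat) (pi : R)
  (P' : {set 'I_np}) (U' : {set 'I_nu}) : R :=
  #|U'|%:R * (1 / nu%:R) - #|P'|%:R * (pi / np%:R).

Definition vstar (R : realType) (np nu : nat) (pi : R)
  (P' : {set 'I_np}) (U' : {set 'I_nu}) : \bar R :=
  let s := Wp pi P' U' + Wn pi P' U' in
  if s == 0 then +oo%E else (Wp pi P' U' / s)%:E.

Definition sq_loss (R : realType) (v y : R) : R := (1 - v * y) ^+ 2.
Definition logistic_loss (R : realType) (v y : R) : R := ln (1 + expR (- (v * y))).

From HB Require Import structures.
From mathcomp Require Import all_boot all_order all_algebra.
From mathcomp Require Import all_classical all_reals all_analysis.
From mathcomp Require Import ring lra.
Set Implicit Arguments. Unset Strict Implicit. Unset Printing Implicit Defensive.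
Import Order.TTheory GRing.Theory Num.Theory.
Local Open Scope ring_scope.

(* The node risk only depends on the class weights: it equals
   [Wp * ell v 1 + Wn * ell v (-1)], and [W = Wp + Wn = |U'| / nu >= 0].
   If [W = 0] then [Wn = - Wp < 0] and both losses make the risk unbounded
   below.  Otherwise [Wp = W r] and [Wn = W (1 - r)] with [r = v*].  For the
   square loss, completing the square gives the minimum at [v = 2r - 1].  For
   the logistic loss, writing [p] for the sigmoid of [v], the risk is [W] times
   the cross entropy of [p] relative to [r]; by Gibbs' inequality it is
   minimal at [p = r] when [0 < r < 1], tends to [0] without being attained
   when [r] is [0] or [1], and is unbounded below when [r > 1], since then
   [Wn < 0] and [softplus v >= v]. *)

Section ErealInfRange.
Variables (R : realType) (T : Type) (f : T -> R).

Lemma ereal_inf_approx (x : R) :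
  (forall t, x <= f t) -> (forall e, 0 < e -> exists t, f t <= x + e) ->
  ereal_inf [set (f t)%:E | t in [set: T]] = x%:E.
Proof.
move=> lb_f approx; apply/le_anti/andP; split; last first.
  by apply: le_ereal_inf_tmp => _ [t _ <-]; rewrite lee_fin.
apply/lee_addgt0Pr => e /approx [t fte].
by apply: ge_ereal_inf; exists (f t)%:E; [exists t | rewrite -EFinD lee_fin].
Qed.

Lemma ereal_inf_min (t0 : T) : (forall t, f t0 <= f t) ->
  ereal_inf [set (f t)%:E | t in [set: T]] = (f t0)%:E.
Proof.
move=> min_f; apply: ereal_inf_approx => // e e_gt0.
by exists t0; rewrite lerDl ltW.
Qed.

Lemma ereal_inf_Ny : (forall M, exists t, f t <= M) ->
  ereal_inf [set (f t)%:E | t in [set: T]] = -oo%E.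
Proof.
move=> unbounded.
have inf_le M : (ereal_inf [set (f t)%:E | t in [set: T]] <= M%:E)%E.
  have [t ftM] := unbounded M.
  by apply: ge_ereal_inf; exists (f t)%:E; [exists t | rewrite lee_fin].
case: (ereal_inf _) inf_le => [r | | ] // inf_le.
- by have := inf_le (r - 1); rewrite lee_fin lerBrDr gerDl ler10.
- by have := inf_le 0.
Qed.

End ErealInfRange.

Section ClassWeights.
Variables (R : realType) (np nu : nat) (pi : R).
Variables (P' : {set 'I_np}) (U' : {set 'I_nu}).

Definition weighted_risk_inf (ell : R -> R -> R) (a b : R) : \bar R :=
  ereal_inf [set (a * ell v 1 + b * ell v (-1))%:E | v in [set: R]].

Lemma uPU_infE (ell : R -> R -> R) :
  uPU_inf pi ell P' U' = weighted_risk_inf ell (Wp pi P' U') (Wn pi P' U').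
Proof.
rewrite /uPU_inf /weighted_risk_inf.
suff -> : uPU_risk pi ell P' U'
    = fun v => Wp pi P' U' * ell v 1 + Wn pi P' U' * ell v (-1) by [].
by apply/funext => v; rewrite /uPU_risk /Wp /Wn /= !sumr_const; ring.
Qed.

Lemma Wp_gt0 : (0 < np)%N -> 0 < pi -> P' != finset.set0 -> 0 < Wp pi P' U'.
Proof. by move=> np_gt0 pi_gt0 P'_n0; rewrite mulr_gt0 ?divr_gt0 ?ltr0n ?card_gt0. Qed.

Lemma Wp_add_Wn : Wp pi P' U' + Wn pi P' U' = #|U'|%:R / nu%:R.
Proof. by rewrite /Wp /Wn; ring. Qed.

Lemma Wp_add_Wn_eq0 : (0 < nu)%N ->
  (Wp pi P' U' + Wn pi P' U' == 0) = (U' == finset.set0).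
Proof.
move=> nu_gt0.
rewrite Wp_add_Wn mulf_eq0 invr_eq0 !pnatr_eq0.
by rewrite [(nu == 0)%N]eqn0Ngt nu_gt0 orbF cards_eq0.
Qed.

End ClassWeights.

Section SquareLoss.
Variable R : realType.

Lemma sq_loss_pos (v : R) : sq_loss v 1 = (1 - v) ^+ 2.
Proof. by rewrite /sq_loss mulr1. Qed.

Lemma sq_loss_neg (v : R) : sq_loss v (-1) = (1 + v) ^+ 2.
Proof. by rewrite /sq_loss mulrN1 opprK. Qed.

Lemma sq_risk_inf_Ny (a : R) : 0 < a -> weighted_risk_inf (@sq_loss R) a (- a) = -oo%E.
Proof.
move=> a_gt0; apply: ereal_inf_Ny => M; exists (- M / (4 * a)).
rewrite sq_loss_pos sq_loss_neg le_eqVlt; apply/orP; left; apply/eqP.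
by field; rewrite gt_eqF.
Qed.

Lemma sq_weighted_riskE (W r v : R) :
  W * r * sq_loss v 1 + W * (1 - r) * sq_loss v (-1)
  = 4 * W * r * (1 - r) + W * (v - (2 * r - 1)) ^+ 2.
Proof. by rewrite sq_loss_pos sq_loss_neg; ring. Qed.

Lemma sq_risk_inf (W r : R) : 0 <= W ->
  weighted_risk_inf (@sq_loss R) (W * r) (W * (1 - r)) = (4 * W * r * (1 - r))%:E.
Proof.
move=> W_ge0; rewrite /weighted_risk_inf (ereal_inf_min (t0 := 2 * r - 1)).
  by rewrite sq_weighted_riskE subrr expr0n /= mulr0 addr0.
move=> v; rewrite !sq_weighted_riskE subrr expr0n /= mulr0 addr0.
by rewrite lerDl mulr_ge0 ?sqr_ge0.
Qed.

End SquareLoss.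

Section LogisticLoss.
Variable R : realType.

Definition softplus (u : R) : R := ln (1 + expR u).

Definition sigmoid (v : R) : R := (1 + expR (- v))^-1.

Definition cross_entropy (r p : R) : R := - r * ln p - (1 - r) * ln (1 - p).

Lemma logistic_loss_pos (v : R) : logistic_loss v 1 = softplus (- v).
Proof. by rewrite /logistic_loss mulr1. Qed.

Lemma logistic_loss_neg (v : R) : logistic_loss v (-1) = softplus v.
Proof. by rewrite /logistic_loss mulrN1 opprK. Qed.

Lemma softplus_ge0 (u : R) : 0 <= softplus u.
Proof. by apply: ln_ge0; rewrite lerDl expR_ge0. Qed.

Lemma softplus_le_expR (u : R) : softplus u <= expR u.
Proof. by apply: le_ln1Dx; have := expR_gt0 u; lra. Qed.

Lemma softplus_ge_id (u : R) : u <= softplus u.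
Proof. by rewrite /softplus -{1}(expRK u) ler_ln ?posrE ?lerDr ?addr_gt0 ?expR_gt0. Qed.

Lemma sigmoid_gt0 (v : R) : 0 < sigmoid v.
Proof. by rewrite invr_gt0 addr_gt0 ?expR_gt0. Qed.

Lemma sigmoidN (v : R) : sigmoid (- v) = 1 - sigmoid v.
Proof.
rewrite /sigmoid opprK expRN; have := expR_gt0 v => ev_gt0.
by field; rewrite !gt_eqF ?addr_gt0.
Qed.

Lemma sigmoid_lt1 (v : R) : sigmoid v < 1.
Proof. by rewrite -subr_gt0 -sigmoidN sigmoid_gt0. Qed.

Lemma softplusN_sigmoid (v : R) : softplus (- v) = - ln (sigmoid v).
Proof. by rewrite /sigmoid lnV ?opprK // posrE addr_gt0 ?expR_gt0. Qed.

Lemma softplus_sigmoid (v : R) : softplus v = - ln (1 - sigmoid v).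
Proof. by rewrite -sigmoidN -softplusN_sigmoid opprK. Qed.

Lemma sigmoid_logit (r : R) : 0 < r < 1 -> sigmoid (ln (r / (1 - r))) = r.
Proof.
case/andP=> r_gt0 r_lt1; have q_gt0 : 0 < r / (1 - r) by rewrite divr_gt0 ?subr_gt0.
rewrite /sigmoid expRN lnK ?posrE //; field.
by rewrite addrCA subrr addr0 oner_neq0 andbT !gt_eqF ?subr_gt0.
Qed.

Lemma ln_le_subr1 (y : R) : 0 < y -> ln y <= y - 1.
Proof. by move=> y_gt0; have := @le_ln1Dx R (y - 1); rewrite subrKC; apply; lra. Qed.

Lemma cross_entropy_ge (r p : R) : 0 < r < 1 -> 0 < p < 1 ->
  cross_entropy r r <= cross_entropy r p.
Proof.
case/andP=> r_gt0 r_lt1 /andP[p_gt0 p_lt1].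
have ln_ratio_le (s q : R) : 0 < s -> 0 < q -> s * (ln q - ln s) <= q - s.
  move=> s_gt0 q_gt0; have -> : q - s = s * (q / s - 1) by field; rewrite gt_eqF.
  rewrite ler_wpM2l ?(ltW s_gt0) // -lnV ?posrE // -lnM ?posrE ?invr_gt0 //.
  exact: ln_le_subr1 (divr_gt0 q_gt0 s_gt0).
have := ln_ratio_le r p r_gt0 p_gt0.
have := ln_ratio_le (1 - r) (1 - p); rewrite !subr_gt0 => /(_ r_lt1 p_lt1).
rewrite /cross_entropy; lra.
Qed.

Lemma logistic_weighted_riskE (W r v : R) :
  W * r * logistic_loss v 1 + W * (1 - r) * logistic_loss v (-1)
  = W * cross_entropy r (sigmoid v).
Proof.
rewrite logistic_loss_pos logistic_loss_neg softplusN_sigmoid softplus_sigmoid.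
by rewrite /cross_entropy; ring.
Qed.

Lemma logistic_risk_inf (W r : R) : 0 <= W -> 0 < r < 1 ->
  weighted_risk_inf (@logistic_loss R) (W * r) (W * (1 - r))
  = (W * cross_entropy r r)%:E.
Proof.
move=> W_ge0 r01; rewrite /weighted_risk_inf (ereal_inf_min (t0 := ln (r / (1 - r)))).
  by rewrite logistic_weighted_riskE sigmoid_logit.
move=> v; rewrite !logistic_weighted_riskE sigmoid_logit // ler_wpM2l //.
by rewrite cross_entropy_ge // sigmoid_gt0 sigmoid_lt1.
Qed.

Lemma scaled_softplus_le (W e : R) : 0 < W -> 0 < e ->
  W * softplus (ln (e / W)) <= e.
Proof.
move=> W_gt0 e_gt0; have := softplus_le_expR (ln (e / W)).
rewrite lnK ?posrE ?divr_gt0 // -(ler_pM2l W_gt0) => /le_trans; apply.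
by rewrite mulrCA mulfV ?gt_eqF ?mulr1.
Qed.

Lemma logistic_risk_inf_degenerate (W r : R) : 0 < W -> r = 0 \/ r = 1 ->
  weighted_risk_inf (@logistic_loss R) (W * r) (W * (1 - r)) = 0%:E.
Proof.
move=> W_gt0 r01; apply: ereal_inf_approx => [v | e e_gt0] /=.
  have [Wr_ge0 Wr'_ge0] : 0 <= W * r /\ 0 <= W * (1 - r).
    by case: r01 => ->; rewrite ?subr0 ?subrr mulr0 mulr1; split => //; exact: ltW.
  by rewrite addr_ge0 // mulr_ge0 // softplus_ge0.
rewrite add0r; case: r01 => ->.
- exists (ln (e / W)).
  by rewrite logistic_loss_neg mulr0 mul0r add0r subr0 mulr1 scaled_softplus_le.
- exists (- ln (e / W)).
  by rewrite logistic_loss_pos opprK subrr mulr0 mul0r addr0 mulr1 scaled_softplus_le.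
Qed.

Lemma logistic_risk_inf_Ny (a b : R) : 0 <= a -> b < 0 ->
  weighted_risk_inf (@logistic_loss R) a b = -oo%E.
Proof.
move=> a_ge0 b_lt0; apply: ereal_inf_Ny => M.
pose v := (`|M| + a) / - b; exists v.
have v_ge0 : 0 <= v by rewrite divr_ge0 ?addr_ge0 // oppr_ge0 ltW.
have bv : b * v = - (`|M| + a) by rewrite /v; field; rewrite lt_eqF.
have exp_le1 : expR (- v) <= 1 by rewrite expR_le1 oppr_le0.
have pos_term : a * softplus (- v) <= a.
  by rewrite -[leRHS]mulr1 ler_wpM2l // (le_trans (softplus_le_expR _)).
have neg_term : b * softplus v <= b * v by rewrite ler_wnM2l ?softplus_ge_id // ltW.
have := ler_norm (- M); rewrite normrN logistic_loss_pos logistic_loss_neg; lra.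
Qed.

End LogisticLoss.

Theorem proposition1 (R : realType) (d np nu : nat)
  (xp : 'I_np -> 'rV[R]_d) (xu : 'I_nu -> 'rV[R]_d) (pi : R)
  (hnp : (0 < np)%N) (hnu : (0 < nu)%N) (hpi0 : 0 < pi) (hpi1 : pi < 1)
  (P' : {set 'I_np}) (U' : {set 'I_nu})
  (hne : P' != finset.set0 \/ U' != finset.set0) :
  let W := Wp pi P' U' + Wn pi P' U' in
  let vs := vstar pi P' U' in
  (* (a) quadratic loss *)
  ((vs = +oo%E -> uPU_inf pi (@sq_loss R) P' U' = -oo%E) /\
   (forall r : R, vs = r%:E ->
      uPU_inf pi (@sq_loss R) P' U' = (4 * W * r * (1 - r))%:E)) /\
  (* (b) logistic loss *)
  ((forall r : R, vs = r%:E -> 0 < r < 1 ->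
      uPU_inf pi (@logistic_loss R) P' U'
      = (W * (- r * ln r - (1 - r) * ln (1 - r)))%:E) /\
   ((vs = 0%:E \/ vs = 1%:E) -> uPU_inf pi (@logistic_loss R) P' U' = 0%:E) /\
   ((1%:E < vs)%E -> uPU_inf pi (@logistic_loss R) P' U' = -oo%E)).
Proof.
move=> W vs; rewrite !uPU_infE.
have vsE : vs = if W == 0 then +oo%E else (Wp pi P' U' / W)%:E by [].
have W_ge0 : 0 <= W by rewrite /W Wp_add_Wn divr_ge0.
have [W0 | W_neq0] := eqVneq W 0.
  have Wp_gt0 : 0 < Wp pi P' U'.
    apply: Wp_gt0 => //; case: hne => // /negbTE U'_n0.
    by move: W0; rewrite /W => /eqP; rewrite Wp_add_Wn_eq0 // U'_n0.
  have -> : Wn pi P' U' = - Wp pi P' U' by rewrite /W in W0; lra.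
  rewrite vsE W0 eqxx; split; [split | split; [| split]] => //.
  - by rewrite sq_risk_inf_Ny.
  - by case.
  - by move=> _; apply: logistic_risk_inf_Ny; lra.
have W_gt0 : 0 < W by rewrite lt_neqAle eq_sym W_neq0.
move: vsE; rewrite (negbTE W_neq0); set r := Wp pi P' U' / W => ->.
have -> : Wp pi P' U' = W * r by rewrite /r mulrCA mulfV ?mulr1.
have -> : Wn pi P' U' = W * (1 - r) by rewrite /r /W; field.
split; [split | split; [| split]] => // [_ [<-] | _ [<-] r01 | r01 | ].
- exact: sq_risk_inf.
- exact: logistic_risk_inf.
- by apply: logistic_risk_inf_degenerate => //; case: r01 => -[]; auto.
- rewrite lte_fin => r_gt1; apply: logistic_risk_inf_Ny; nra.
Qed.
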